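(* Suppose $F$ is symmetric, i.e. $F(-i)=1-F(i)$ for all $i\in[-1/2,1/2]$, and let $\sigma=q_H/q_L$. Then the value $V(R)$ of the recommendation system, as a function of the threshold $R\in(0,1)$, is (i) decreasing in $R$ if $\sigma<1$; (ii) increasing in $R$ if $\sigma>1$; (iii) constant in $R$ if $\sigma=1$.
   Context: Setting. Consumer types are $i\in[-1/2,1/2]$, distributed according to a continuous cumulative distribution function $F$ with full support on $[-1/2,1/2]$. A product has a quality vector $(Q_1,Q_2)\in\{0,1\}^2$; a type-$i$ consumer gets payoff $(1/2+i)Q_1+(1/2-i)Q_2$ from it. The versions $(1,1),(1,0),(0,1),(0,0)$ have prior probabilities $q_H,q_1,q_2,q_L$ respectively, all strictly positive and summing to $1$. One product carries a recommendation from a sender whose type is drawn from $F$ independently of the product; given a threshold $R\in(0,1)$, the sender gives a buy recommendation $B$ if her payoff from the product is at least $R$ and a don't-buy recommendation $D$ otherwise. Let $\phi_1(R)=1-F(R-1/2)$, $\phi_2(R)=F(1/2-R)$, $\pi^B=q_H+q_1\phi_1(R)+q_2\phi_2(R)$, $\pi^D=1-\pi^B$. Posteriors: $p^B_H=q_H/\pi^B$, $p^B_1=q_1\phi_1(R)/\pi^B$, $p^B_2=q_2\phi_2(R)/\pi^B$, $p^B_L=0$; $p^D_H=0$, $p^D_1=q_1(1-\phi_1(R))/\pi^D$, $p^D_2=q_2(1-\phi_2(R))/\pi^D$, $p^D_L=q_L/\pi^D$. For $r\in\{B,D\}$ let $U_i^r=p_H^r+(1/2+i)p_1^r+(1/2-i)p_2^r$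 and $U_i^0=q_H+(1/2+i)q_1+(1/2-i)q_2$. The value of the recommendation system is $V(R)=\pi^B\int_{-1/2}^{1/2}\max\{U_i^B-U_i^0,0\}\,dF(i)+\pi^D\int_{-1/2}^{1/2}\max\{U_i^D-U_i^0,0\}\,dF(i)$, the expected payoff gain of a receiver drawn from $F$ who optimally chooses between the recommended product and an unrecommended alternative. *)

From mathcomp Require Import all_boot all_order all_algebra.
From mathcomp Require Import all_classical all_reals all_analysis.
Import Order.TTheory GRing.Theory Num.Theory.
Import numFieldNormedType.Exports.
Local Open Scope classical_set_scope.
Local Open Scope ring_scope.

Definition cdf_of {R : realType} (mu : probability R R) (x : R) : R :=
  fine (mu `]-oo, x]%classic).

Section Model.
Context {R : realType} (mu : probability R R) (qH q1 q2 : R).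

Let F := cdf_of mu.

Definition types : set R := `[(- (1/2)), 1/2]%classic.

Definition phi1 (r : R) : R := 1 - F (r - 1/2).
Definition phi2 (r : R) : R := F (1/2 - r).

Definition piB (r : R) : R := qH + q1 * phi1 r + q2 * phi2 r.
Definition piD (r : R) : R := 1 - piB r.

Definition pB_H (r : R) : R := qH / piB r.
Definition pB_1 (r : R) : R := q1 * phi1 r / piB r.
Definition pB_2 (r : R) : R := q2 * phi2 r / piB r.

Definition pD_H (r : R) : R := 0.
Definition pD_1 (r : R) : R := q1 * (1 - phi1 r) / piD r.
Definition pD_2 (r : R) : R := q2 * (1 - phi2 r) / piD r.

Definition UB (r i : R) : R := pB_H r + (1/2 + i) * pB_1 r + (1/2 - i) * pB_2 r.
Definition UD (r i : R) : R := pD_H r + (1/2 + i) * pD_1 r + (1/2 - i) * pD_2 r.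
Definition U0 (i : R) : R := qH + (1/2 + i) * q1 + (1/2 - i) * q2.

(* Value of the recommendation system; the integrals are w.r.t. dF,
   i.e. Lebesgue integrals against mu over the type space. *)
Definition value (r : R) : R :=
  piB r * (\int[mu]_(i in types) Num.max (UB r i - U0 i) 0)
  + piD r * (\int[mu]_(i in types) Num.max (UD r i - U0 i) 0).

End Model.

From mathcomp Require Import all_boot all_order all_algebra.
From mathcomp Require Import all_classical all_reals all_analysis.
From mathcomp Require Import measurable_realfun ring lra.
Import Order.TTheory GRing.Theory Num.Theory.
Import numFieldNormedType.Exports.
Local Open Scope classical_set_scope.
Local Open Scope ring_scope.

(* Under symmetry phi2 = phi1 =: p. The gain of type i from either
   recommendation is affine in i, so its sign is fixed by the extreme types
   i = 1/2 and i = -1/2: a buy recommendation helps every type and a don't-buy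
   recommendation hurts every type, so only the B-term of V survives. As the
   symmetric type distribution gives 1/2 + i and 1/2 - i the same mean 1/2,
   V(R) = (qH (2 qL + q1 + q2) + (q1 + q2) (qL - qH) p) / 2. Full support makes
   p = 1 - F(R - 1/2) strictly decreasing in R, so the sign of qL - qH, that is
   of 1 - sigma, decides how V varies with R. *)

Lemma measurable_types (R : realType) : measurable (types : set R).
Proof. exact: measurable_itv. Qed.

Lemma types_halfD_ge0 [R : realType] [x : R] : types x -> 0 <= 1/2 + x.
Proof. by rewrite /types /= in_itv /= => /andP[? ?]; lra. Qed.

Lemma types_halfB_ge0 [R : realType] [x : R] : types x -> 0 <= 1/2 - x.
Proof. by rewrite /types /= in_itv /= => /andP[? ?]; lra. Qed.

Section CumulativeDistribution.
Variables (R : realType) (mu : probability R R).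

Lemma cdf_ofE x : mu `]-oo, x]%classic = (cdf_of mu x)%:E.
Proof. by rewrite /cdf_of fineK ?fin_num_measure. Qed.

Lemma cdf_of_ge0 x : 0 <= cdf_of mu x.
Proof. by rewrite -lee_fin -cdf_ofE measure_ge0. Qed.

Lemma cdf_of_le1 x : cdf_of mu x <= 1.
Proof. by rewrite -lee_fin -cdf_ofE probability_le1. Qed.

Lemma measure_itvoc a b : a <= b ->
  mu `]a, b]%classic = (cdf_of mu b - cdf_of mu a)%:E.
Proof.
move=> ab.
have -> : `]a, b]%classic = `]-oo, b]%classic `\` `]-oo, a]%classic.
  apply/seteqP; split => y /=; rewrite !in_itv /=.
    by move=> /andP[ay yb]; split => //; apply/negP; rewrite -ltNge.
  by move=> [yb /negP]; rewrite -ltNge => ->.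
rewrite measureD ?ltey_eq ?fin_num_measure//.
have -> : `]-oo, b]%classic `&` `]-oo, a]%classic = `]-oo, a]%classic.
  by apply: setIidr => y /=; rewrite !in_itv /= => /le_trans; apply.
by rewrite EFinB -!cdf_ofE.
Qed.

Hypothesis cdf_cont : continuous (cdf_of mu).

Lemma measure_itvNyo x : mu `]-oo, x[%classic = (cdf_of mu x)%:E.
Proof.
apply/le_anti/andP; split.
  rewrite -cdf_ofE; apply: le_measure; rewrite ?inE// => y /=.
  by rewrite !in_itv /= => /ltW.
rewrite -[mu _]fineK ?fin_num_measure// lee_fin; apply/ler_addgt0Pr => e e0.
have /cvgrPdist_lt/(_ e e0)/nbhs_ballP[d /= d0 near_x] := cdf_cont x.
have x_d : ball x d (x - d / 2).
  rewrite -ball_normE /ball_ /= opprB addrC subrK ger0_norm ?divr_ge0 ?ltW//.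
  by rewrite ltr_pdivrMr// ltr_pMr// ltr1n.
have /ltr_distlDr/ltW Fx := near_x _ x_d.
apply: (le_trans Fx); rewrite lerD2r /cdf_of fine_le ?fin_num_measure//.
apply: le_measure; rewrite ?inE// => y /=; rewrite !in_itv /= => /le_lt_trans; apply.
by rewrite ltrBlDr ltrDl divr_gt0.
Qed.

Lemma measure_itvco a b : a <= b ->
  mu `[a, b[%classic = (cdf_of mu b - cdf_of mu a)%:E.
Proof.
move=> ab.
have -> : `[a, b[%classic = `]-oo, b[%classic `\` `]-oo, a[%classic.
  apply/seteqP; split => y /=; rewrite !in_itv /=.
    by move=> /andP[ay yb]; split => //; apply/negP; rewrite -leNgt.
  by move=> [yb /negP]; rewrite -leNgt => ->.
rewrite measureD ?ltey_eq ?fin_num_measure//.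
have -> : `]-oo, b[%classic `&` `]-oo, a[%classic = `]-oo, a[%classic.
  by apply: setIidr => y /=; rewrite !in_itv /= => /lt_le_trans; apply.
by rewrite EFinB -!measure_itvNyo.
Qed.

End CumulativeDistribution.

Lemma phi1_strictly_decreasing [R : realType] [mu : probability R R] :
  (forall a b : R, - (1/2) <= a -> a < b -> b <= 1/2 -> cdf_of mu a < cdf_of mu b) ->
  forall r1 r2 : R, 0 < r1 -> r1 < r2 -> r2 < 1 -> phi1 mu r2 < phi1 mu r1.
Proof.
by move=> cdf_lt r1 r2 r1_gt0 r12 r2_lt1; rewrite /phi1 ltrD2l ltrN2; apply: cdf_lt; lra.
Qed.

Section SymmetricDistribution.
Variables (R : realType) (mu : probability R R).
Hypotheses (mu_types : mu types = 1%E) (cdf_cont : continuous (cdf_of mu))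
  (cdf_ofN_types : forall i, - (1/2) <= i <= 1/2 -> cdf_of mu (- i) = 1 - cdf_of mu i).

Lemma cdf_of_ge_half x : 1/2 <= x -> cdf_of mu x = 1.
Proof.
move=> x_ge; apply/le_anti; rewrite cdf_of_le1 -lee_fin -cdf_ofE -mu_types /types.
apply: le_measure; rewrite ?inE// => y /=; rewrite !in_itv /= => /andP[_ y_le].
exact: le_trans x_ge.
Qed.

Lemma cdf_of_lt_Nhalf x : x < - (1/2) -> cdf_of mu x = 0.
Proof.
move=> x_lt; apply/le_anti; rewrite cdf_of_ge0 andbT -lee_fin -cdf_ofE.
have <- : mu (~` types) = 0%:E.
  by rewrite probability_setC ?mu_types ?subee//; exact: measurable_types.
apply: le_measure; rewrite ?inE//; first exact: measurableC (measurable_types R).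
move=> y /=; rewrite in_itv /= => y_le; apply/negP.
by rewrite in_itv /= leNgt (le_lt_trans y_le x_lt).
Qed.

Lemma cdf_ofN x : cdf_of mu (- x) = 1 - cdf_of mu x.
Proof.
have [x_gt|x_le] := ltP (1/2) x.
  by rewrite (cdf_of_ge_half _ (ltW x_gt)) cdf_of_lt_Nhalf ?subrr// ltrN2.
have [x_lt|x_ge] := ltP x (- (1/2)).
  by rewrite (cdf_of_lt_Nhalf _ x_lt) cdf_of_ge_half ?subr0// lerNr ltW.
by rewrite cdf_ofN_types// x_le x_ge.
Qed.

(* The two measures agree on the half-open intervals, a pi-system generating
   the Borel sets. *)
Lemma pushforward_oppr A : measurable A -> pushforward mu -%R A = mu A.
Proof.
move=> mA; symmetry.
pose g k := [set` Interval (BSide false (1 *- k)) (BSide false (k%:R : R))].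
have ocitv_meas : @ocitv R `<=` measurable by move=> X oX; apply: sub_sigma_algebra.
have g_ocitv k : ocitv (g k) by exists (1 *- k, k%:R).
have mu_g_fin k : (mu (g k) < +oo)%E.
  by rewrite ltey_eq fin_num_measure//; apply: ocitv_meas.
have agree X : ocitv X -> mu X = pushforward mu -%R X.
  case/ocitvP => [->|[[a b] /= ab ->]].
    by rewrite /pushforward preimage_set0 !measure0.
  rewrite /pushforward opp_preimage_itvbndbnd /= measure_itvoc ?ltW//.
  by rewrite measure_itvco ?lerN2 ?ltW// !cdf_ofN; congr (_%:E); ring.
exact: (@g_sigma_algebra_measure_unique _ R R _ ocitv_meas g g_ocitv
  (bigcup_itvT false false) mu (pushforward mu -%R) (@ocitvI R) agree mu_g_fin A mA).
Qed.

Lemma ge0_integral_types_oppr (f : R -> \bar R) :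
  measurable_fun types f -> (forall x, types x -> (0 <= f x)%E) ->
  (\int[mu]_(x in types) f x = \int[mu]_(x in types) f (- x)%R)%E.
Proof.
move=> mf f_ge0.
rewrite (eq_measure_integral (pushforward mu -%R)); last first.
  by move=> A mA _; apply/esym/pushforward_oppr.
rewrite ge0_integral_pushforward//; first last.
- by move=> x; rewrite inE; apply: f_ge0.
- exact: measurable_types.
by rewrite /types opp_preimage_itvbndbnd /= opprK.
Qed.

Let measurable_types_R : measurable (types : set R) := measurable_types R.

Let measurable_halfD : measurable_fun types (fun x : R => (1/2 + x)%:E).
Proof. exact/measurable_EFinP/measurable_funD. Qed.

Let measurable_halfB : measurable_fun types (fun x : R => (1/2 - x)%:E).
Proof. exact/measurable_EFinP/measurable_funB. Qed.

Let halfD_ge0 (x : R) : types x -> (0 <= (1/2 + x)%:E)%E.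
Proof. by move=> /types_halfD_ge0; rewrite lee_fin. Qed.

Let halfB_ge0 (x : R) : types x -> (0 <= (1/2 - x)%:E)%E.
Proof. by move=> /types_halfB_ge0; rewrite lee_fin. Qed.

Lemma integral_types_halfD_halfB :
  (\int[mu]_(x in types) (1/2 + x)%:E = \int[mu]_(x in types) (1/2 - x)%:E)%E.
Proof. exact: ge0_integral_types_oppr. Qed.

(* By symmetry the two integrals agree, and they add up to [mu types = 1]. *)
Lemma integral_types_halfD : (\int[mu]_(x in types) (1/2 + x)%:E = (1/2)%:E)%E.
Proof.
have : (\int[mu]_(x in types) (1/2 + x)%:E + \int[mu]_(x in types) (1/2 - x)%:E = 1)%E.
  rewrite -ge0_integralD// (eq_integral (cst 1%:E)); last first.
    by move=> x _; rewrite -EFinD addrACA subrr addr0 -splitr.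
  by rewrite integral_cst// mul1e; exact: mu_types.
rewrite -integral_types_halfD_halfB.
by case: (\int[mu]_(x in types) _)%E => // r; rewrite -EFinD => -[r2]; congr (_%:E); lra.
Qed.

Lemma integral_types_halfB : (\int[mu]_(x in types) (1/2 - x)%:E = (1/2)%:E)%E.
Proof. by rewrite -integral_types_halfD_halfB integral_types_halfD. Qed.

Lemma Rintegral_types_gain a b : 0 <= a -> 0 <= b ->
  \int[mu]_(i in types) Num.max ((1/2 + i) * a + (1/2 - i) * b) 0 = (a + b) / 2.
Proof.
move=> a_ge0 b_ge0.
rewrite (eq_Rintegral _ (g := fun i : R => (1/2 + i) * a + (1/2 - i) * b)); last first.
  move=> i; rewrite inE => types_i.
  have [iD_ge0 iB_ge0] := (types_halfD_ge0 types_i, types_halfB_ge0 types_i).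
  by rewrite max_l// addr_ge0// mulr_ge0.
rewrite /Rintegral.
under eq_integral do rewrite EFinD !EFinM muleC [X in (_ + X)%E]muleC.
rewrite ge0_integralD//; last 4 first.
- by move=> x /halfD_ge0; apply: mule_ge0.
- exact: measurable_funeM.
- by move=> x /halfB_ge0; apply: mule_ge0.
- exact: measurable_funeM.
rewrite !ge0_integralZl// integral_types_halfD integral_types_halfB /=.
by rewrite mulrDl !div1r.
Qed.

Lemma Rintegral_types_loss a b : a <= 0 -> b <= 0 ->
  \int[mu]_(i in types) Num.max ((1/2 + i) * a + (1/2 - i) * b) 0 = 0.
Proof.
move=> a_le0 b_le0; rewrite (eq_Rintegral _ (g := fun=> 0 : R)); last first.
  move=> i; rewrite inE => types_i.
  have iDa_le0 := mulr_ge0_le0 (types_halfD_ge0 types_i) a_le0.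
  have iBb_le0 := mulr_ge0_le0 (types_halfB_ge0 types_i) b_le0.
  by rewrite max_r//; lra.
by rewrite Rintegral_cst ?mul0r//; exact: measurable_types.
Qed.

End SymmetricDistribution.

Section SymmetricValue.
Context {R : realType} {mu : probability R R} {qH q1 q2 qL : R}.
Hypotheses (mu_types : mu types = 1%E) (cdf_cont : continuous (cdf_of mu))
  (cdf_ofN_types : forall i, - (1/2) <= i <= 1/2 -> cdf_of mu (- i) = 1 - cdf_of mu i)
  (qH_gt0 : 0 < qH) (q1_gt0 : 0 < q1) (q2_gt0 : 0 < q2) (qL_gt0 : 0 < qL)
  (q_sum : qH + q1 + q2 + qL = 1).
Variable r : R.

Let p := phi1 mu r.

Let qLE : qL = 1 - qH - q1 - q2.
Proof. by rewrite -q_sum; ring. Qed.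

Let p_ge0 : 0 <= p.
Proof. by rewrite /p /phi1 subr_ge0 cdf_of_le1. Qed.

Let p_le1 : p <= 1.
Proof. by rewrite /p /phi1 lerBlDr lerDl cdf_of_ge0. Qed.

Lemma phi2_sym : phi2 mu r = phi1 mu r.
Proof. by rewrite /phi2 /phi1 -cdf_ofN// opprB. Qed.

Let piB_sym : piB mu qH q1 q2 r = qH + (q1 + q2) * p.
Proof. by rewrite /piB phi2_sym /p; ring. Qed.

Let piD_sym : piD mu qH q1 q2 r = qL + (q1 + q2) * (1 - p).
Proof. by rewrite /piD piB_sym qLE; ring. Qed.

Let piB_gt0 : 0 < piB mu qH q1 q2 r.
Proof. by rewrite piB_sym; apply: ltr_wpDr => //; rewrite mulr_ge0// addr_ge0// ltW. Qed.

Let piD_gt0 : 0 < piD mu qH q1 q2 r.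
Proof.
by rewrite piD_sym; apply: ltr_wpDr => //; rewrite mulr_ge0 ?subr_ge0// addr_ge0// ltW.
Qed.

(* [A1 / piB] and [A2 / piB] are the gains of the extreme types i = 1/2 and
   i = -1/2 from a buy recommendation, [- A1 / piD] and [- A2 / piD] their gains
   from a don't-buy recommendation. *)
Let A1 := (1 - p) * qH * (qL + q2) + p * qL * (qH + q1).
Let A2 := (1 - p) * qH * (qL + q1) + p * qL * (qH + q2).

Let A1_ge0 : 0 <= A1.
Proof. by rewrite addr_ge0// !mulr_ge0 ?subr_ge0 ?addr_ge0 ?cdf_of_le1//; apply: ltW. Qed.

Let A2_ge0 : 0 <= A2.
Proof. by rewrite addr_ge0// !mulr_ge0 ?subr_ge0 ?addr_ge0 ?cdf_of_le1//; apply: ltW. Qed.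

Let UB_sub_U0 i : UB mu qH q1 q2 r i - U0 qH q1 q2 i =
  (1/2 + i) * (A1 / piB mu qH q1 q2 r) + (1/2 - i) * (A2 / piB mu qH q1 q2 r).
Proof.
rewrite /UB /U0 /pB_H /pB_1 /pB_2 phi2_sym piB_sym /A1 /A2 /p qLE.
by field; rewrite -piB_sym gt_eqF.
Qed.

Let UD_sub_U0 i : UD mu qH q1 q2 r i - U0 qH q1 q2 i =
  (1/2 + i) * - (A1 / piD mu qH q1 q2 r) + (1/2 - i) * - (A2 / piD mu qH q1 q2 r).
Proof.
rewrite /UD /U0 /pD_H /pD_1 /pD_2 phi2_sym piD_sym /A1 /A2 /p qLE.
by field; rewrite -qLE -piD_sym gt_eqF.
Qed.

Lemma value_sym :
  value mu qH q1 q2 r = (qH * (2 * qL + q1 + q2) + (q1 + q2) * (qL - qH) * phi1 mu r) / 2.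
Proof.
rewrite /value (eq_Rintegral _ (fun i _ => congr1 (Num.max ^~ 0) (UB_sub_U0 i))).
rewrite (eq_Rintegral _ (fun i _ => congr1 (Num.max ^~ 0) (UD_sub_U0 i))).
rewrite Rintegral_types_gain ?divr_ge0 ?(ltW piB_gt0)//.
rewrite Rintegral_types_loss ?oppr_le0 ?divr_ge0 ?(ltW piD_gt0)// mulr0 addr0.
by rewrite /A1 /A2 /p; field; rewrite gt_eqF.
Qed.

End SymmetricValue.

Theorem proposition5 (R : realType) (mu : probability R R) (qH q1 q2 qL : R) :
  (* F has support in [-1/2,1/2] *)
  mu `[(- (1/2)), 1/2]%classic = 1%E ->
  (* F is continuous *)
  continuous (cdf_of mu) ->
  (* F has full support on [-1/2,1/2] *)
  (forall a b : R, - (1/2) <= a -> a < b -> b <= 1/2 -> cdf_of mu a < cdf_of mu b) ->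
  (* F is symmetric *)
  (forall i : R, - (1/2) <= i <= 1/2 -> cdf_of mu (- i) = 1 - cdf_of mu i) ->
  (* prior over versions *)
  0 < qH -> 0 < q1 -> 0 < q2 -> 0 < qL -> qH + q1 + q2 + qL = 1 ->
  let sigma := qH / qL in
  let V := value mu qH q1 q2 in
  (sigma < 1 -> forall r1 r2 : R, 0 < r1 -> r1 < r2 -> r2 < 1 -> V r2 < V r1) /\
  (sigma > 1 -> forall r1 r2 : R, 0 < r1 -> r1 < r2 -> r2 < 1 -> V r1 < V r2) /\
  (sigma = 1 -> forall r1 r2 : R, 0 < r1 -> r2 < 1 -> r1 < 1 -> 0 < r2 -> V r1 = V r2).
Proof.
move=> mu_types cdf_cont cdf_lt cdf_ofN_types qH_gt0 q1_gt0 q2_gt0 qL_gt0 q_sum sigma V.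
have V_sub r1 r2 :
    V r1 - V r2 = (q1 + q2) / 2 * ((qL - qH) * (phi1 mu r1 - phi1 mu r2)).
  have VE := value_sym mu_types cdf_cont cdf_ofN_types qH_gt0 q1_gt0 q2_gt0 qL_gt0 q_sum.
  by rewrite /V !VE; ring.
have q12_gt0 : 0 < (q1 + q2) / 2 by rewrite divr_gt0// addr_gt0.
have phi1_lt := phi1_strictly_decreasing cdf_lt.
split; [|split].
- rewrite /sigma ltr_pdivrMr// mul1r => qH_lt r1 r2 r1_gt0 r12 r2_lt1.
  rewrite -subr_gt0 V_sub (pmulr_rgt0 _ q12_gt0) pmulr_rgt0 ?subr_gt0//.
  exact: phi1_lt.
- rewrite /sigma ltr_pdivlMr// mul1r => qL_lt r1 r2 r1_gt0 r12 r2_lt1.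
  rewrite -subr_lt0 V_sub (pmulr_rlt0 _ q12_gt0) nmulr_rlt0 ?subr_lt0 ?subr_gt0//.
  exact: phi1_lt.
- move=> /divr1_eq qH_eq r1 r2 _ _ _ _.
  by apply/eqP; rewrite -subr_eq0 V_sub qH_eq subrr mul0r mulr0.
Qed.
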